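(* Let $l(y_p,y)$ be a loss function differentiable in $y$, and let $g_l^*=\max_{y_p\in[-1,1]}\left|\frac{\partial l(y_p,y)}{\partial y}\big|_{y=0}\right|$ (assumed finite). Let $\lambda>0$. Suppose gradient-based data filtering is applied, i.e. only instances with gradient $|g_i|\le g_l^*$ are used. Then the sensitivity of the split gain $G(I_L,I_R)=\frac{(\sum_{i\in I_L}g_i)^2}{|I_L|+\lambda}+\frac{(\sum_{i\in I_R}g_i)^2}{|I_R|+\lambda}$ satisfies $\Delta G\le 3{g_l^*}^2$, and the sensitivity of the leaf value $V(I)=-\frac{\sum_{i\in I}g_i}{|I|+\lambda}$ satisfies $\Delta V\le \frac{g_l^*}{1+\lambda}$.
   Context: Gradient-based data filtering (GDF): at each boosting iteration, every training instance whose gradient $g_i$ satisfies $|g_i|>g_l^*$ is discarded for that iteration, so that all instances entering the computations of $G$ and $V$ have $|g_i|\le g_l^*$. Sensitivities are taken over neighboring inputs: for $G$, split configurations $(I_L,I_R)$ and one obtained by adding one instance to $I_L$ or to $I_R$; for $V$, instance sets $I$ and $I\cup\{s\}$. *)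

From HB Require Import structures.
From mathcomp Require Import all_boot all_order all_algebra.
From mathcomp Require Import all_classical all_reals all_analysis.
Set Implicit Arguments. Unset Strict Implicit. Unset Printing Implicit Defensive.
Import Order.TTheory GRing.Theory Num.Theory.
Local Open Scope ring_scope.

Definition split_gain (R : realType) (T : finType) (g : T -> R) (lambda : R)
  (IL IR : {set T}) : R :=
  (\sum_(i in IL) g i) ^+ 2 / (#|IL|%:R + lambda)
  + (\sum_(i in IR) g i) ^+ 2 / (#|IR|%:R + lambda).

Definition leaf_value (R : realType) (T : finType) (g : T -> R) (lambda : R)
  (I : {set T}) : R :=
  - (\sum_(i in I) g i) / (#|I|%:R + lambda).

From HB Require Import structures.
From mathcomp Require Import all_boot all_order all_algebra.
From mathcomp Require Import all_classical all_reals all_analysis.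
From mathcomp Require Import ring lra.
Import Order.TTheory GRing.Theory Num.Theory.
Local Open Scope ring_scope.

(* Adding an instance s to a set of n instances changes the gradient sum S to
   S + g s and the denominator n + lambda to n + 1 + lambda. Under the filter
   |g i| <= c we have |S| <= n c, and putting the difference of the two
   quotients over the common denominator (n + lambda)(n + 1 + lambda) reduces
   both bounds to polynomial inequalities in n, c and lambda. For the leaf
   value this uses n^2 >= n, which holds because n is a natural number. *)

Lemma norm_sum_le_card_mul (R : numDomainType) (T : finType) (g : T -> R)
    (c : R) (A : {set T}) :
  (forall i, i \in A -> `|g i| <= c) -> `|\sum_(i in A) g i| <= #|A|%:R * c.
Proof.
move=> gA; apply: le_trans (ler_norm_sum _ _ _) _.
by rewrite mulr_natl -sumr_const ler_sum.
Qed.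

Lemma sq_ratio_increment_le (R : realFieldType) (lambda : R) (n : nat)
    (S x c : R) : 0 < lambda ->
  `|S| <= n%:R * c -> `|x| <= c ->
  `|(x + S) ^+ 2 / (n.+1%:R + lambda) - S ^+ 2 / (n%:R + lambda)|
    <= 3 * c ^+ 2.
Proof.
move=> lambda_gt0 S_le x_le; have c_ge0 : 0 <= c := le_trans (normr_ge0 x) x_le.
have n_ge0 : 0 <= (n%:R : R) := ler0n _ n.
have den_gt0 : 0 < n%:R + lambda by lra.
have den1_gt0 : 0 < n%:R + 1 + lambda by lra.
have -> : (x + S) ^+ 2 / (n.+1%:R + lambda) - S ^+ 2 / (n%:R + lambda) =
    ((2 * S * x + x ^+ 2) * (n%:R + lambda) - S ^+ 2)
      / ((n%:R + lambda) * (n%:R + 1 + lambda)).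
  by rewrite -addn1 natrD; field; rewrite ?gt_eqF.
rewrite normf_div (gtr0_norm (mulr_gt0 den_gt0 den1_gt0)).
rewrite ler_pdivrMr ?mulr_gt0 //.
have Sx_le : `|S * x| <= n%:R * c * c by rewrite normrM ler_pM.
move: S_le x_le Sx_le; rewrite !ler_norml.
move=> /andP[S_ge S_le] /andP[x_ge x_le] /andP[Sx_ge Sx_le].
have S2_le : S ^+ 2 <= (n%:R * c) ^+ 2 by nra.
have x2_le : x ^+ 2 <= c ^+ 2 by nra.
by apply/andP; split; nra.
Qed.

Lemma neg_ratio_increment_le (R : realFieldType) (lambda : R) (n : nat)
    (S x c : R) : 0 < lambda ->
  `|S| <= n%:R * c -> `|x| <= c ->
  `|- (x + S) / (n.+1%:R + lambda) - - S / (n%:R + lambda)|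
    <= c / (1 + lambda).
Proof.
move=> lambda_gt0 S_le x_le; have c_ge0 : 0 <= c := le_trans (normr_ge0 x) x_le.
have n_ge0 : 0 <= (n%:R : R) := ler0n _ n.
have n_le_sq : (n%:R : R) <= n%:R * n%:R.
  by rewrite -natrM ler_nat; case: (n) => // k; rewrite leq_pmull.
have den_gt0 : 0 < n%:R + lambda by lra.
have den1_gt0 : 0 < n%:R + 1 + lambda by lra.
have -> : - (x + S) / (n.+1%:R + lambda) - - S / (n%:R + lambda) =
    (S - x * (n%:R + lambda)) / ((n%:R + lambda) * (n%:R + 1 + lambda)).
  by rewrite -addn1 natrD; field; rewrite ?gt_eqF.
rewrite normf_div (gtr0_norm (mulr_gt0 den_gt0 den1_gt0)).
rewrite ler_pdivrMr ?mulr_gt0 //.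
have num_le : `|S - x * (n%:R + lambda)| <= n%:R * c + c * (n%:R + lambda).
  rewrite (le_trans (ler_normB _ _)) // lerD // normrM (gtr0_norm den_gt0).
  by rewrite ler_pM // ltW.
rewrite (le_trans num_le) // mulrAC ler_pdivlMr; nra.
Qed.

Section NeighbouringSets.

Variables (R : realType) (T : finType) (g : T -> R) (lambda c : R).
Hypothesis lambda_gt0 : 0 < lambda.

Lemma sq_sum_ratio_setU1_le (A : {set T}) (s : T) :
  s \notin A -> (forall i, i \in s |: A -> `|g i| <= c) ->
  `|(\sum_(i in s |: A) g i) ^+ 2 / (#|s |: A|%:R + lambda)
    - (\sum_(i in A) g i) ^+ 2 / (#|A|%:R + lambda)| <= 3 * c ^+ 2.
Proof.
move=> sA g_le; rewrite big_setU1 // cardsU1 sA.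
apply: sq_ratio_increment_le => //; last by rewrite g_le ?setU11.
by apply: norm_sum_le_card_mul => i iA; rewrite g_le // setU1r.
Qed.

Lemma split_gain_setU1l_le (IL IR : {set T}) (s : T) :
  s \notin IL -> (forall i, i \in s |: IL -> `|g i| <= c) ->
  `|split_gain g lambda (s |: IL) IR - split_gain g lambda IL IR|
    <= 3 * c ^+ 2.
Proof.
by rewrite /split_gain opprD addrACA subrr addr0; exact: sq_sum_ratio_setU1_le.
Qed.

Lemma split_gain_setU1r_le (IL IR : {set T}) (s : T) :
  s \notin IR -> (forall i, i \in s |: IR -> `|g i| <= c) ->
  `|split_gain g lambda IL (s |: IR) - split_gain g lambda IL IR|
    <= 3 * c ^+ 2.
Proof.
by rewrite /split_gain opprD addrACA subrr add0r; exact: sq_sum_ratio_setU1_le.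
Qed.

Lemma leaf_value_setU1_le (I : {set T}) (s : T) :
  s \notin I -> (forall i, i \in s |: I -> `|g i| <= c) ->
  `|leaf_value g lambda (s |: I) - leaf_value g lambda I| <= c / (1 + lambda).
Proof.
move=> sI g_le; rewrite /leaf_value big_setU1 // cardsU1 sI.
apply: neg_ratio_increment_le => //; last by rewrite g_le ?setU11.
by apply: norm_sum_le_card_mul => i iI; rewrite g_le // setU1r.
Qed.

End NeighbouringSets.

Theorem corollary1 (R : realType) (T : finType) (l : R -> R -> R)
  (gstar lambda : R) (g : T -> R) :
  (* l(y_p, .) differentiable (at y = 0) for y_p in [-1,1] *)
  (forall yp : R, -1 <= yp <= 1 -> derivable (l yp) 0 1) ->
  (* g_l^* = max_{y_p in [-1,1]} |dl(y_p,y)/dy at y = 0| (attained, finite) *)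
  (exists2 yp : R, -1 <= yp <= 1 & gstar = `|derive1 (l yp) 0|) ->
  (forall yp : R, -1 <= yp <= 1 -> `|derive1 (l yp) 0| <= gstar) ->
  0 < lambda ->
  (* sensitivity of G over neighbouring split configurations *)
  (forall (IL IR : {set T}) (s : T),
      [disjoint IL & IR] -> s \notin IL :|: IR ->
      (forall i, i \in s |: (IL :|: IR) -> `|g i| <= gstar) ->
      `|split_gain g lambda (s |: IL) IR - split_gain g lambda IL IR|
        <= 3 * gstar ^+ 2
      /\ `|split_gain g lambda IL (s |: IR) - split_gain g lambda IL IR|
        <= 3 * gstar ^+ 2)
  /\
  (* sensitivity of V over neighbouring instance sets I, I ∪ {s} *)
  (forall (I : {set T}) (s : T), s \notin I ->
      (forall i, i \in s |: I -> `|g i| <= gstar) ->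
      `|leaf_value g lambda (s |: I) - leaf_value g lambda I|
        <= gstar / (1 + lambda)).
Proof.
move=> _ _ _ lambda_gt0; split; last exact: leaf_value_setU1_le.
move=> IL IR s _ s_notin g_le.
move: s_notin; rewrite !inE negb_or => /andP[sIL sIR]; split.
- apply: split_gain_setU1l_le => //.
  by move=> i /setU1P[-> | iI]; apply: g_le; rewrite !inE ?eqxx // iI orbT.
- apply: split_gain_setU1r_le => //.
  by move=> i /setU1P[-> | iI]; apply: g_le; rewrite !inE ?eqxx // iI !orbT.
Qed.
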